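(* $\widetilde{\mathbb{R}}=\mathbb{R}^{\mathrm{alg}}$, i.e. $\widetilde{\mathbb{R}}$ equals the field of real numbers that are algebraic over $\mathbb{Q}$.
   Context: Let $K$ be a field. For $r\in K$, a finite set $A(r)$ with $\{r\}\subseteq A(r)\subseteq K$ is called adequate for $r$ if every mapping $f:A(r)\to K$ satisfying (1) if $1\in A(r)$ then $f(1)=1$; (2) if $a,b\in A(r)$ and $a+b\in A(r)$ then $f(a+b)=f(a)+f(b)$; (3) if $a,b\in A(r)$ and $a\cdot b\in A(r)$ then $f(a\cdot b)=f(a)\cdot f(b)$, also satisfies $f(r)=r$. $\widetilde{K}$ denotes the set of all $r\in K$ for which some finite set adequate for $r$ exists. $\mathbb{R}^{\mathrm{alg}}$ denotes the field of real algebraic numbers. *)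

From HB Require Import structures.
From mathcomp Require Import all_boot all_order all_algebra.
From mathcomp Require Import all_classical all_reals.
Set Implicit Arguments. Unset Strict Implicit. Unset Printing Implicit Defensive.
Import Order.TTheory GRing.Theory Num.Theory.
Local Open Scope ring_scope.

(* The finite set A(r) is represented by a finite sequence A : seq K
   (its set of elements).  A mapping A -> K is represented by any
   f : K -> K (only its values on A matter; every map A -> K extends). *)

Definition respects (K : fieldType) (A : seq K) (f : K -> K) : Prop :=
  [/\ (1 \in A -> f 1 = 1),
      (forall a b, a \in A -> b \in A -> a + b \in A -> f (a + b) = f a + f b) &
      (forall a b, a \in A -> b \in A -> a * b \in A -> f (a * b) = f a * f b)].

Definition adequate (K : fieldType) (r : K) (A : seq K) : Prop :=
  r \in A /\ forall f : K -> K, respects A f -> f r = r.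

Definition in_tilde (K : fieldType) (r : K) : Prop :=
  exists A : seq K, adequate r A.

From HB Require Import structures.
From mathcomp Require Import all_boot all_order all_algebra.
From mathcomp Require Import all_classical all_reals.
From mathcomp Require ordered_qelim qe_rcf qe_rcf_th.
From mathcomp Require Import polyrcf lra.
Set Implicit Arguments. Unset Strict Implicit. Unset Printing Implicit Defensive.
Import Order.TTheory GRing.Theory Num.Theory.
Local Open Scope ring_scope.

(* If [A] is adequate for [r], the values [g 0] over all maps [g] respecting the
   relations holding in [r :: A] form a set defined by an existential formula
   with no constants. By quantifier elimination it is a Boolean combination of
   sign conditions on polynomials over Q; when [r] is transcendental none of them
   vanishes at [r], so the set contains an interval [(r, r + d)], contradicting
   adequacy.
   Conversely, if [p(r) = 0] with [p] over Q, isolate [r] among the roots of [p]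
   by rationals [a < r < b]. A set containing the integers needed to rebuild the
   coefficients of [p], [a] and [b], the Horner scheme of [p(r)], and square roots
   witnessing [a <= r <= b] forces [f r] to be a root of [p] in [[a, b]], that is
   [f r = r]. *)

Module O := ordered_qelim.ord.
Module Q := qe_rcf.
Import -(notations) ordered_qelim.ord.

(* The quantifier elimination of [qe_rcf] only introduces rational constants
   (the coefficients of Tarski queries); the lemmas below follow its procedures. *)
Section RationalConstants.
Variable F : realFieldType.

Definition is_rat (c : F) := exists q : rat, c = ratr q.

Lemma is_rat_nat n : is_rat n%:R. Proof. by exists n%:R; rewrite rmorph_nat. Qed.
Lemma is_rat_int (z : int) : is_rat z%:~R.
Proof. by exists z%:~R; rewrite rmorph_int. Qed.
Lemma is_rat0 : is_rat 0. Proof. by exists 0; rewrite rmorph0. Qed.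

Lemma is_ratN c : is_rat c -> is_rat (- c).
Proof. by case=> q ->; exists (- q); rewrite rmorphN. Qed.

Fixpoint rat_term (t : GRing.term F) : Prop :=
  match t with
  | GRing.Const c => is_rat c
  | GRing.Var _ | GRing.NatConst _ => Logic.True
  | GRing.Add u v | GRing.Mul u v => rat_term u /\ rat_term v
  | GRing.Opp u | GRing.Inv u | GRing.NatMul u _ | GRing.Exp u _ => rat_term u
  end.

Fixpoint rat_form (f : O.formula F) : Prop :=
  match f with
  | O.Bool _ => Logic.True
  | O.Equal a b | O.Lt a b | O.Le a b => rat_term a /\ rat_term b
  | O.Unit a => rat_term a
  | O.And f g | O.Or f g | O.Implies f g => rat_form f /\ rat_form g
  | O.Not f | O.Exists _ f | O.Forall _ f => rat_form f
  end.

Definition rat_qterm (t : Q.term F) := rat_term (Q.rterm_to_term t).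
Definition rat_qform (f : Q.formula F) := rat_form (Q.qfr_to_formula f).
Fixpoint rat_polyF (p : Q.polyF F) : Prop :=
  match p with [::] => Logic.True | t :: p => rat_qterm t /\ rat_polyF p end.
Fixpoint rat_polyFs (s : seq (Q.polyF F)) : Prop :=
  match s with [::] => Logic.True | t :: p => rat_polyF t /\ rat_polyFs p end.

Ltac rat_split := rewrite /rat_qform /rat_qterm /Q.If /Q.bind_def /=;
  repeat match goal with
  | |- _ /\ _ => split
  | |- Logic.True => exact I
  | |- rat_form (Q.qfr_to_formula ?f) => change (rat_qform f)
  | |- rat_term (Q.rterm_to_term ?f) => change (rat_qterm f)
  end; auto.

Lemma rat_Size p k : rat_polyF p -> (forall n, rat_qform (k n)) -> rat_qform (Q.Size p k).
Proof.
elim: p k => [|c p IH] k /=; first by move=> _; apply.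
case=> hc hp hk; rewrite /Q.bind_def; apply: IH => // -[|n]; last by apply: hk.
rat_split.
Qed.

Lemma rat_AmulXn a n : rat_qterm a -> rat_polyF (Q.AmulXn a n).
Proof. by move=> ha; elim: n => [|n IH] /=; split => //; apply: is_rat0. Qed.

Lemma rat_AddPoly p q : rat_polyF p -> rat_polyF q -> rat_polyF (Q.AddPoly p q).
Proof.
elim: p q => [|a p IH] [|b q] //= [ha hp] [hb hq]; split; last exact: IH.
by split.
Qed.

Lemma rat_ScalPoly c p : rat_qterm c -> rat_polyF p -> rat_polyF (Q.ScalPoly c p).
Proof. by move=> hc; elim: p => [|a p IH] //= [ha hp]; split; [split|apply: IH]. Qed.

Lemma rat_MulPoly p q : rat_polyF p -> rat_polyF q -> rat_polyF (Q.MulPoly p q).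
Proof.
elim: p => [|a p IH] //= [ha hp] hq; apply: rat_AddPoly; first exact: rat_ScalPoly.
by split => //; apply: IH.
Qed.

Lemma rat_ExpPoly p n : rat_polyF p -> rat_polyF (Q.ExpPoly p n).
Proof.
move=> hp; rewrite /Q.ExpPoly; case: n => [|n] /=; first by [].
by elim: n => [|n IH] //=; apply: rat_MulPoly.
Qed.

Lemma rat_OppPoly p : rat_polyF p -> rat_polyF (Q.OppPoly p).
Proof. by apply: rat_ScalPoly; rewrite /rat_qterm /=; apply/is_ratN/(is_rat_nat 1). Qed.

Lemma rat_NatMulPoly n p : rat_polyF p -> rat_polyF (Q.NatMulPoly n p).
Proof. by apply: rat_ScalPoly. Qed.

Lemma rat_Horner p x : rat_polyF p -> rat_qterm x -> rat_qterm (Q.Horner p x).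
Proof. by move=> + hx; elim: p => [|a p IH] //= [ha hp]; rat_split. Qed.

Lemma rat_Deriv p : rat_polyF p -> rat_polyF (Q.Deriv p).
Proof.
elim: p => [|a p IH] //= [ha hp]; apply: rat_AddPoly => //; split => //.
exact: IH.
Qed.

Ltac rat_polyF_auto := repeat first [ assumption | apply: rat_AddPoly | apply: rat_MulPoly
  | apply: rat_OppPoly | apply: rat_AmulXn | apply: rat_ScalPoly | apply: rat_ExpPoly
  | apply: rat_Deriv | apply: is_rat0 | split ].

Lemma rat_Isnull p k : rat_polyF p -> (forall b, rat_qform (k b)) ->
  rat_qform (Q.Isnull p k).
Proof. by move=> hp hk; apply: rat_Size. Qed.

Lemma rat_LtSize p q k : rat_polyF p -> rat_polyF q -> (forall b, rat_qform (k b)) ->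
  rat_qform (Q.LtSize p q k).
Proof. by move=> hp hq hk; apply: rat_Size => // n; apply: rat_Size. Qed.

Lemma rat_LeadCoef p k : rat_polyF p -> (forall l, rat_qterm l -> rat_qform (k l)) ->
  rat_qform (Q.LeadCoef p k).
Proof.
elim: p k => [|c p IH] k /=; first by move=> _; apply; apply: is_rat0.
case=> hc hp hk; rewrite /Q.bind_def; apply: IH => // l hl; rat_split.
Qed.

Lemma rat_Rediv_rec_loop q sq cq c qq r n k : rat_polyF q -> rat_qterm cq ->
  rat_polyF qq -> rat_polyF r ->
  (forall c qq r, rat_polyF qq -> rat_polyF r -> rat_qform (k (c, qq, r))) ->
  rat_qform (Q.Rediv_rec_loop q sq cq c qq r n k).
Proof.
elim: n c qq r => [|n IH] c qq r hq hcq hqq hr hk /=; rewrite /Q.bind_def;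
  apply: rat_Size => // sr; case: ifP => _; try exact: hk;
  apply: rat_LeadCoef => // lr hlr.
- by apply: hk; rat_polyF_auto.
- by apply: IH; rat_polyF_auto.
Qed.

Lemma rat_Rediv p q k : rat_polyF p -> rat_polyF q ->
  (forall c qq r, rat_polyF qq -> rat_polyF r -> rat_qform (k (c, qq, r))) ->
  rat_qform (Q.Rediv p q k).
Proof.
move=> hp hq hk; rewrite /Q.Rediv /Q.bind_def; apply: rat_Isnull => // -[].
  by apply: hk => //; split => //; apply: is_rat0.
apply: rat_Size => // sq; apply: rat_Size => // sp; apply: rat_LeadCoef => // lq hlq.
by apply: rat_Rediv_rec_loop => //; split => //; apply: is_rat0.
Qed.

Lemma rat_Rmod p q k : rat_polyF p -> rat_polyF q -> (forall r, rat_polyF r ->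
  rat_qform (k r)) ->
  rat_qform (Q.Rmod p q k).
Proof. by move=> hp hq hk; apply: rat_Rediv => // c qq r _ /hk. Qed.

Lemma rat_Rscal p q k : rat_polyF p -> rat_polyF q -> (forall r, rat_qform (k r)) ->
  rat_qform (Q.Rscal p q k).
Proof. by move=> hp hq hk; apply: rat_Rediv => // c qq r _ _; apply: hk. Qed.

Lemma rat_Rgcd_loop n p q k : rat_polyF p -> rat_polyF q -> (forall r, rat_polyF r ->
  rat_qform (k r)) ->
  rat_qform (Q.Rgcd_loop n p q k).
Proof.
elim: n p q => [|n IH] p q hp hq hk /=; rewrite /Q.bind_def;
  apply: rat_Rmod => // r hr; apply: rat_Isnull => // -[]; try exact: hk.
exact: IH.
Qed.

Lemma rat_Rgcd p q k : rat_polyF p -> rat_polyF q -> (forall r, rat_polyF r ->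
  rat_qform (k r)) ->
  rat_qform (Q.Rgcd p q k).
Proof.
move=> hp hq hk; rewrite /Q.Rgcd /Q.bind_def; apply: rat_LtSize => // -[];
  (apply: rat_Isnull => //; case; [exact: hk|]);
  by apply: rat_Size => // n; apply: rat_Rgcd_loop.
Qed.

Lemma rat_BigRgcd ps k : rat_polyFs ps -> (forall r, rat_polyF r -> rat_qform (k r)) ->
  rat_qform (Q.BigRgcd ps k).
Proof.
elim: ps k => [|p ps IH] k /=; first by move=> _; apply; split => //; apply: is_rat0.
case=> hp hps hk; rewrite /Q.bind_def; apply: IH => // r hr; exact: rat_Rgcd.
Qed.

Lemma rat_Changes s k : rat_polyF s -> (forall n, rat_qform (k n)) ->
  rat_qform (Q.Changes s k).
Proof.
elim: s k => [|a s IH] k /=; first by move=> _; apply.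
case=> ha hs hk; rewrite /Q.bind_def; apply: IH => // v.
by case: s hs => [|b s] hs; rat_split; case: hs.
Qed.

Lemma rat_SeqPInfty ps k : rat_polyFs ps -> (forall s, rat_polyF s -> rat_qform (k s)) ->
  rat_qform (Q.SeqPInfty ps k).
Proof.
elim: ps k => [|p ps IH] k /=; first by move=> _; apply.
case=> hp hps hk; rewrite /Q.bind_def; apply: rat_LeadCoef => // l hl.
by apply: IH => // s hs; apply: hk.
Qed.

Lemma rat_SeqMInfty ps k : rat_polyFs ps -> (forall s, rat_polyF s -> rat_qform (k s)) ->
  rat_qform (Q.SeqMInfty ps k).
Proof.
elim: ps k => [|p ps IH] k /=; first by move=> _; apply.
case=> hp hps hk; rewrite /Q.bind_def; apply: rat_LeadCoef => // l hl.
apply: rat_Size => // sp; apply: IH => // s hs; apply: hk; split => //.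
by rewrite /rat_qterm /=; split => //; apply/is_ratN/(is_rat_nat 1).
Qed.

Lemma rat_ChangesPoly ps k : rat_polyFs ps -> (forall z, rat_qform (k z)) ->
  rat_qform (Q.ChangesPoly ps k).
Proof.
move=> hps hk; rewrite /Q.ChangesPoly /Q.bind_def.
apply: rat_SeqMInfty => // s hs; apply: rat_SeqPInfty => // s' hs'.
by apply: rat_Changes => // v; apply: rat_Changes.
Qed.

Lemma rat_NextMod p q k : rat_polyF p -> rat_polyF q -> (forall r, rat_polyF r ->
  rat_qform (k r)) ->
  rat_qform (Q.NextMod p q k).
Proof.
move=> hp hq hk; rewrite /Q.NextMod /Q.bind_def; apply: rat_LeadCoef => // l hl.
apply: rat_Rscal => // sp; apply: rat_Rmod => // r hr; apply: hk.
by apply: rat_ScalPoly.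
Qed.

Lemma rat_ModsAux p q n k : rat_polyF p -> rat_polyF q -> (forall s, rat_polyFs s ->
  rat_qform (k s)) ->
  rat_qform (Q.ModsAux p q n k).
Proof.
elim: n p q k => [|n IH] p q k hp hq hk /=; first by apply: hk.
rewrite /Q.bind_def; apply: rat_Isnull => // -[]; first by apply: hk.
by apply: rat_NextMod => // r hr; apply: IH => // s hs; apply: hk.
Qed.

Lemma rat_Mods p q k : rat_polyF p -> rat_polyF q -> (forall s, rat_polyFs s ->
  rat_qform (k s)) ->
  rat_qform (Q.Mods p q k).
Proof.
move=> hp hq hk; rewrite /Q.Mods /Q.bind_def; apply: rat_Size => // sp.
by apply: rat_Size => // sq; apply: rat_ModsAux.
Qed.

Lemma rat_polyFs_nth sq i : rat_polyFs sq -> rat_polyF (nth [::] sq i).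
Proof. by elim: sq i => [|p sq IH] [|i] //= [hp hsq] //; apply: IH. Qed.

Lemma rat_PolyComb sq sc : rat_polyFs sq -> rat_polyF (Q.PolyComb sq sc).
Proof.
move=> hsq; rewrite /Q.PolyComb /reducebig.
elim: (iota _ _) => [|i l IH] /=; first by split.
by apply: rat_MulPoly => //; apply/rat_ExpPoly/rat_polyFs_nth.
Qed.

Lemma rat_Pcq sq i : rat_polyFs sq -> rat_polyF (Q.Pcq sq i).
Proof.
move=> hsq; rewrite /Q.Pcq.
elim: (qe_rcf_th.sg_tab _) i => [|a l IH] [|i] //=; exact: rat_PolyComb.
Qed.

Lemma rat_TaqR p q k : rat_polyF p -> rat_polyF q -> (forall z, rat_qform (k z)) ->
  rat_qform (Q.TaqR p q k).
Proof.
move=> hp hq hk; rewrite /Q.TaqR /Q.bind_def.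
by apply: rat_Mods => //; [rat_polyF_auto | move=> s hs; apply: rat_ChangesPoly].
Qed.

Lemma rat_TaqsR p sq i k : rat_polyF p -> rat_polyFs sq -> (forall t, rat_qterm t ->
  rat_qform (k t)) ->
  rat_qform (Q.TaqsR p sq i k).
Proof.
move=> hp hsq hk; rewrite /Q.TaqsR /Q.bind_def; apply: rat_TaqR => //.
  exact: rat_Pcq.
by move=> n; apply: hk; apply: is_rat_int.
Qed.

Lemma is_rat_nth s i : (forall x, x \in s -> is_rat x) -> is_rat (nth 0 s i).
Proof.
move=> hs; have [lti|] := ltnP i (size s); first by apply/hs/mem_nth.
by move=> /(nth_default 0) ->; apply: is_rat0.
Qed.

Lemma is_rat_coefs n i : is_rat (qe_rcf_th.coefs F n i).
Proof.
rewrite /qe_rcf_th.coefs /=; apply: is_rat_nth => x /mapP [i0 _ ->].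
rewrite castmxE.
have -> : map_mx (intr : int -> F) (qe_rcf_th.ctmat n) =
    map_mx (ratr : rat -> F) (map_mx (intr : int -> rat) (qe_rcf_th.ctmat n)).
  by apply/matrixP => a b; rewrite !mxE rmorph_int.
by rewrite -map_invmx mxE; eexists.
Qed.

Lemma rat_Coefs n i : rat_qterm (Q.Coefs F n i).
Proof.
rewrite /rat_qterm /Q.Coefs /=; case: n => [|[|n]]; first exact: is_rat_nat.
  have h2 : is_rat (2%:R^-1 : F) by exists 2%:R^-1; rewrite fmorphV rmorph_nat.
  by case: i => [|[|[|i]]] //=; rewrite ?nth_nil; apply: is_rat0.
exact: is_rat_coefs.
Qed.

Lemma rat_CcountWeak p sq k : rat_polyF p -> rat_polyFs sq -> (forall t, rat_qterm t ->
  rat_qform (k t)) ->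
  rat_qform (Q.CcountWeak p sq k).
Proof.
move=> hp hsq hk; rewrite /Q.CcountWeak.
have : rat_qterm (Q.NatConst F 0) by [].
elim: (3 ^ _)%N (Q.NatConst F 0) => [|i IH] s hs /=; first exact: hk.
rewrite /Q.bind_def; apply: rat_TaqsR => // t ht; apply: IH.
by rewrite /rat_qterm /=; split; [split => //; apply: rat_Coefs|].
Qed.

Lemma rat_BoundingPoly sq : rat_polyFs sq -> rat_polyF (Q.BoundingPoly sq).
Proof.
move=> hsq; rewrite /Q.BoundingPoly; apply: rat_Deriv; rewrite /reducebig.
by elim: sq hsq => [|q sq IH] /= => [_|[hq /IH h]]; [split|apply: rat_MulPoly].
Qed.

Lemma rat_CcountGt0 sp sq : rat_polyFs sp -> rat_polyFs sq ->
  rat_qform (Q.CcountGt0 sp sq).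
Proof.
move=> hsp hsq; rewrite /Q.CcountGt0 /Q.bind_def; apply: rat_BigRgcd => // p hp.
apply: rat_Isnull => // -[] /=; last first.
  by apply: rat_CcountWeak => // t ht; rat_split.
apply: rat_CcountWeak => //; first exact: rat_BoundingPoly.
move=> t ht; rewrite /rat_qform /=; split; [|split; [|by split]].
- rewrite /reducebig; elim: sq hsq {hsp} => [|q sq IH] /=; first by [].
  case=> hq /IH h; split => //; change (rat_qform (Q.LeadCoef q (Q.Lt (Q.NatConst F 0)))).
  by apply: rat_LeadCoef => // l hl; rat_split.
- rewrite /reducebig; elim: sq hsq {hsp} => [|q sq IH] /=; first by [].
  case=> hq /IH h; split => //; change (rat_qform (Q.Size q (fun sq0 : nat =>
                 Q.LeadCoef q
                   (fun lq : Q.term F =>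
                    Q.Lt (Q.NatConst F 0)
                      (Q.Mul (Q.Exp (Q.Opp (Q.NatConst F 1)) sq0.-1) lq))))).
  by apply: rat_Size => // n; apply: rat_LeadCoef => // l hl; rat_split.
Qed.

Lemma rat_abstrX i t : rat_qterm t -> rat_polyF (Q.abstrX i t).
Proof.
elim: t.
- by move=> n _ /=; case: (n == i).
- by move=> c hc /=.
- by move=> n /=.
- by move=> u hu v hv [/hu ? /hv ?]; apply: rat_AddPoly.
- by move=> u hu /hu ?; apply: rat_OppPoly.
- by move=> u hu n /hu ?; apply: rat_NatMulPoly.
- by move=> u hu v hv [/hu ? /hv ?]; apply: rat_MulPoly.
- by move=> u hu n /hu ?; apply: rat_ExpPoly.
Qed.

Lemma rat_to_rterm t : rat_term t -> rat_qterm (Q.to_rterm t).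
Proof.
by elim: t => //= [u hu v hv [/hu ? /hv ?]|u hu v hv [/hu ? /hv ?]]; split.
Qed.

Definition rat_terms (l : seq (GRing.term F)) := forall t, t \in l -> rat_term t.

Lemma rat_wproj n s : rat_terms s.1 -> rat_terms s.2 ->
  rat_form (Q.qfr_to_formula (Q.wproj n s)).
Proof.
case: s => s1 s2 /= h1 h2; apply: rat_CcountGt0.
- by elim: s1 h1 => [|a l IH] //= h; split;
    [apply/rat_abstrX/rat_to_rterm/h/mem_head | apply: IH => t ht; apply/h/mem_behead].
- by elim: s2 h2 => [|a l IH] //= h; split;
    [apply/rat_abstrX/rat_to_rterm/h/mem_head | apply: IH => t ht; apply/h/mem_behead].
Qed.

End RationalConstants.

Section QuantifierElimination.
Variable F : realFieldType.
Implicit Types (t : GRing.term F) (l : seq (GRing.term F)).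

Definition rat_oclause (oc : O.oclause F) := rat_terms (O.terms_of_oclause oc).

Lemma rat_terms_cat l1 l2 : rat_terms (l1 ++ l2) <-> rat_terms l1 /\ rat_terms l2.
Proof.
split=> [h|[h1 h2] t]; first by split=> t ht; apply: h; rewrite mem_cat ht ?orbT.
by rewrite mem_cat => /orP[/h1|/h2].
Qed.

Lemma rat_terms_cons t l : rat_terms (t :: l) <-> rat_term t /\ rat_terms l.
Proof.
split=> [h|[h1 h2] u]; first by split; [apply/h/mem_head|move=> u hu; apply/h/mem_behead].
by rewrite inE => /orP[/eqP->|/h2].
Qed.

Lemma rat_odnf_to_oform bcs : (forall bc, bc \in bcs -> rat_oclause bc) ->
  rat_form (O.odnf_to_oform bcs).
Proof.
elim: bcs => [|[l1 l2 l3 l4] bcs IH] //= h; split; last first.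
  by apply: IH => bc hbc; apply/h/mem_behead.
have := h _ (mem_head _ _); rewrite /rat_oclause /= !rat_terms_cat => -[h1 [h2 [h3 h4]]].
split; first by elim: l1 h1 {h} => //= a l IHl /rat_terms_cons [? /IHl]; do !split.
split; first by elim: l2 h2 {h} => //= a l IHl /rat_terms_cons [? /IHl]; do !split.
split; first by elim: l3 h3 {h} => //= a l IHl /rat_terms_cons [? /IHl]; do !split.
by elim: l4 h4 {h} => //= a l IHl /rat_terms_cons [? /IHl]; do !split.
Qed.

Lemma rat_and_odnf bcs1 bcs2 : (forall bc, bc \in bcs1 -> rat_oclause bc) ->
  (forall bc, bc \in bcs2 -> rat_oclause bc) ->
  forall bc, bc \in O.and_odnf bcs1 bcs2 -> rat_oclause bc.
Proof.
rewrite /O.and_odnf; elim: bcs1 => [|bc1 bcs1 IH] h1 h2 bc; first by rewrite big_nil.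
rewrite big_cons mem_cat => /orP[|]; last first.
  by apply: IH => // b hb; apply/h1/mem_behead.
move=> /mapP [bc2 hbc2 ->]; have := h1 _ (mem_head _ _); have := h2 _ hbc2.
case: bc1 {h1} => a1 a2 a3 a4; case: bc2 {hbc2} => b1 b2 b3 b4.
rewrite /rat_oclause /= !rat_terms_cat; tauto.
Qed.

Lemma rat_qf_to_odnf f b : rat_form f ->
  forall bc, bc \in O.qf_to_odnf f b -> rat_oclause bc.
Proof.
elim: f b => //=.
- by move=> c b _ bc; case: ifP => // _; rewrite inE => /eqP ->.
- move=> t1 t2 [] [h1 h2] bc; rewrite inE => /eqP -> t /=;
    by rewrite ?cats0 /= inE => /eqP ->.
- move=> t1 t2 [] [h1 h2] bc; rewrite inE => /eqP -> t /=;
    by rewrite ?cats0 /= inE => /eqP ->.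
- move=> t1 t2 [] [h1 h2] bc; rewrite inE => /eqP -> t /=;
    by rewrite ?cats0 /= inE => /eqP ->.
- by move=> t [] _ bc //; rewrite inE => /eqP ->.
- move=> f1 IH1 f2 IH2 [] [/IH1 h1 /IH2 h2] bc.
    by rewrite mem_cat => /orP[/h1|/h2].
  by apply: rat_and_odnf; [apply: h1|apply: h2].
- move=> f1 IH1 f2 IH2 [] [/IH1 h1 /IH2 h2] bc.
    by apply: rat_and_odnf; [apply: h1|apply: h2].
  by rewrite mem_cat => /orP[/h1|/h2].
- move=> f1 IH1 f2 IH2 [] [/IH1 h1 /IH2 h2] bc.
    by apply: rat_and_odnf; [apply: h1|apply: h2].
  by rewrite mem_cat => /orP[/h1|/h2].
- by move=> f1 IH1 b /IH1; apply.
- by move=> n f1 IH1 [] _ bc //; rewrite inE => /eqP ->.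
- by move=> n f1 IH1 [] _ bc //; rewrite inE => /eqP ->.
Qed.

Variable wp : nat -> seq (GRing.term F) * seq (GRing.term F) -> O.formula F.
Hypothesis rat_wp : forall n s, rat_terms s.1 -> rat_terms s.2 -> rat_form (wp n s).

Lemma rat_proj n oc : rat_oclause oc -> rat_form (O.proj wp n oc).
Proof.
move=> hoc; rewrite /O.proj /O.oclause_to_w.
have : forall oc2, oc2 \in O.oclause_neq_leq_elim oc -> rat_oclause oc2.
  move=> oc2 /O.terms_of_neq_leq_elim hsub t /hsub; rewrite mem_cat => /orP[/hoc//|].
  move=> /mapP [u hu ->] /=; apply: hoc; case: oc {hsub} hu => a b c d /= hu.
  by rewrite !mem_cat hu orbT.
elim: (O.oclause_neq_leq_elim oc) => [|oc2 l IH] //= h; split.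
  case: oc2 h => a b c d h; have := h _ (mem_head _ _).
  rewrite /rat_oclause /= !rat_terms_cat.
  by case=> ha [_ [hc _]]; apply: rat_wp.
by apply: IH => oc3 h3; apply/h/mem_behead.
Qed.

Lemma rat_elim f n b : rat_form f ->
  rat_form (foldr O.Or (O.Bool false) [seq O.proj wp n i | i <- O.qf_to_odnf f b]).
Proof.
move=> /(rat_qf_to_odnf (b:=b)); elim: (O.qf_to_odnf f b) => [|bc l IH] //= h.
split; first by apply/rat_proj/h/mem_head.
by apply: IH => b0 hb; apply/h/mem_behead.
Qed.

Lemma rat_quantifier_elim f : rat_form f -> rat_form (O.quantifier_elim wp f).
Proof.
elim: f => //=.
- by move=> f1 IH1 f2 IH2 [/IH1 ? /IH2 ?].
- by move=> f1 IH1 f2 IH2 [/IH1 ? /IH2 ?].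
- by move=> f1 IH1 f2 IH2 [/IH1 ? /IH2 ?].
- by move=> n g IHg hg; apply: rat_elim; apply: IHg.
- by move=> n g IHg hg; apply: rat_elim; apply: IHg.
Qed.

End QuantifierElimination.

Section TranscendentalPoint.
Variable R : rcfType.

Lemma rat_term_poly (t : GRing.term R) : GRing.rterm t -> rat_term t ->
  exists p : {poly rat}, forall x : R, GRing.eval [:: x] t = (map_poly ratr p).[x].
Proof.
elim: t => /=.
- move=> [|i] _ _; first by exists 'X => x; rewrite map_polyX hornerX.
  by exists 0 => x; rewrite rmorph0 horner0 /= nth_nil.
- by move=> c _ [q ->]; exists q%:P => x; rewrite map_polyC hornerC.
- by move=> n _ _; exists (n%:R)%:P => x; rewrite map_polyC hornerC /= rmorph_nat.
- move=> u hu v hv /andP[ru rv] [/(hu ru) [p hp] /(hv rv) [q hq]].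
  by exists (p + q) => x; rewrite rmorphD hornerD hp hq.
- move=> u hu ru /(hu ru) [p hp].
  by exists (- p) => x; rewrite rmorphN hornerN hp.
- move=> u hu n ru /(hu ru) [p hp].
  by exists (p *+ n) => x; rewrite rmorphMn hornerMn hp.
- move=> u hu v hv /andP[ru rv] [/(hu ru) [p hp] /(hv rv) [q hq]].
  by exists (p * q) => x; rewrite rmorphM hornerM hp hq.
- by [].
- move=> u hu n ru /(hu ru) [p hp].
  by exists (p ^+ n) => x; rewrite rmorphXn horner_exp hp.
Qed.

Definition near_right (r : R) (P : R -> Prop) :=
  exists2 d : R, 0 < d & forall x, r < x < r + d -> P x.

Lemma near_right_and r (P1 P2 : R -> Prop) :
  near_right r P1 -> near_right r P2 -> near_right r (fun x => P1 x /\ P2 x).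
Proof.
move=> [d1 d10 h1] [d2 d20 h2]; exists (Num.min d1 d2); first by rewrite lt_min d10.
move=> x /andP[rx]; rewrite -ltrBlDl lt_min => /andP[x1 x2].
by split; [apply: h1|apply: h2]; rewrite rx -ltrBlDl.
Qed.

Variable r : R.
Hypothesis r_transcendental : ~ algebraicOver (@ratr R) r.

Lemma rat_poly_sg_near_right (p : {poly rat}) :
  near_right r (fun x => Num.sg (map_poly ratr p).[x] = Num.sg (map_poly ratr p).[r]).
Proof.
have [->|pn0] := eqVneq p 0.
  by exists 1 => // x _; rewrite rmorph0 !horner0.
set P := map_poly ratr p.
have Pr : P.[r] != 0.
  by apply/negP => /eqP h; apply: r_transcendental; exists p => //; rewrite /root h.
have Pr_gt0 : 0 < `|P.[r]| by rewrite normr_gt0.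
have [d d0 hd] := poly_cont r P Pr_gt0.
exists d => // x /andP[rx xd].
have /hd /ltr_normlP [h1 h2] : `|x - r| < d.
  by rewrite ger0_norm ?subr_ge0 ?ltW // ltrBlDl.
have [Pp|Pn|Pz] := ltrgtP 0 P.[r]; last by rewrite Pz eqxx in Pr.
- by rewrite !gtr0_sg //; move: h1 h2; rewrite gtr0_norm //; lra.
- by rewrite !ltr0_sg //; move: h1 h2; rewrite ltr0_norm //; lra.
Qed.

Lemma rat_terms_sg_near_right (t1 t2 : GRing.term R) :
  GRing.rterm t1 -> GRing.rterm t2 -> rat_term t1 -> rat_term t2 ->
  near_right r (fun x => Num.sg (GRing.eval [:: x] t1 - GRing.eval [:: x] t2) =
                         Num.sg (GRing.eval [:: r] t1 - GRing.eval [:: r] t2)).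
Proof.
move=> r1 r2 o1 o2; have [p1 hp1] := rat_term_poly r1 o1.
have [p2 hp2] := rat_term_poly r2 o2.
have [d d0 hd] := rat_poly_sg_near_right (p1 - p2).
by exists d => // x /hd; rewrite !hp1 !hp2 rmorphB !hornerD !hornerN.
Qed.

Lemma qf_eval_near_right f : O.qf_form f -> O.rformula f -> rat_form f ->
  near_right r (fun x => O.qf_eval [:: x] f = O.qf_eval [:: r] f).
Proof.
elim: f => //=.
- by move=> b _ _ _; exists 1.
- move=> t1 t2 _ /andP[r1 r2] [o1 o2].
  have [d d0 hd] := rat_terms_sg_near_right r1 r2 o1 o2.
  by exists d => // x /hd hx; rewrite -subr_eq0 -[RHS]subr_eq0 -sgr_eq0 hx sgr_eq0.
- move=> t1 t2 _ /andP[r1 r2] [o1 o2].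
  have [d d0 hd] := rat_terms_sg_near_right r1 r2 o1 o2.
  by exists d => // x /hd hx; rewrite -subr_lt0 -[RHS]subr_lt0 -sgr_lt0 hx sgr_lt0.
- move=> t1 t2 _ /andP[r1 r2] [o1 o2].
  have [d d0 hd] := rat_terms_sg_near_right r1 r2 o1 o2.
  by exists d => // x /hd hx; rewrite -subr_le0 -[RHS]subr_le0 -sgr_le0 hx sgr_le0.
- move=> f1 IH1 f2 IH2 /andP[q1 q2] /andP[r1 r2] [o1 o2].
  have [d d0 hd] := near_right_and (IH1 q1 r1 o1) (IH2 q2 r2 o2).
  by exists d => // x /hd [-> ->].
- move=> f1 IH1 f2 IH2 /andP[q1 q2] /andP[r1 r2] [o1 o2].
  have [d d0 hd] := near_right_and (IH1 q1 r1 o1) (IH2 q2 r2 o2).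
  by exists d => // x /hd [-> ->].
- move=> f1 IH1 f2 IH2 /andP[q1 q2] /andP[r1 r2] [o1 o2].
  have [d d0 hd] := near_right_and (IH1 q1 r1 o1) (IH2 q2 r2 o2).
  by exists d => // x /hd [-> ->].
- move=> f1 IH1 q1 r1 o1; have [d d0 hd] := IH1 q1 r1 o1.
  by exists d => // x /hd ->.
Qed.

Lemma rat_formula_not_isolated f : O.rformula f -> rat_form f ->
  O.holds [:: r] f -> exists2 x, x != r & O.holds [:: x] f.
Proof.
move=> rf ratf hr.
pose wp n bc := Q.qfr_to_formula (@Q.wproj R n bc).
have qeP := @O.quantifier_elim_rformP R wp (@Q.wf_QE_wproj R) (@Q.valid_QE_wproj R).
have /andP [qf rq] := @O.quantifier_elim_wf R wp (@Q.wf_QE_wproj R) _ rf.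
have rat_qe : rat_form (O.quantifier_elim wp f).
  by apply: rat_quantifier_elim => // n bc h1 h2; apply: rat_wproj.
have [d d0 hd] := qf_eval_near_right qf rq rat_qe.
exists (r + d / 2); first by rewrite -subr_eq0 addrAC subrr add0r gt_eqF ?divr_gt0.
by apply/(qeP _ _ rf); rewrite hd; [apply/(qeP _ _ rf) | apply/andP; split; lra].
Qed.

End TranscendentalPoint.

Section RelationFormula.
Variable R : realFieldType.
Implicit Types s g e : seq R.

Definition big_And (l : seq nat) (h : nat -> O.formula R) :=
  foldr (fun i f => O.And (h i) f) (O.Bool true) l.

(* Variable [i] stands for [s`_i]; only the relations that hold in [s] are recorded. *)
Definition rel_clause s i j k : O.formula R :=
 O.And (if s`_i + s`_j == s`_k then
          O.Equal (GRing.Add (GRing.Var _ i) (GRing.Var _ j)) (GRing.Var _ k)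
        else O.Bool true)
 (O.And (if s`_i * s`_j == s`_k then
          O.Equal (GRing.Mul (GRing.Var _ i) (GRing.Var _ j)) (GRing.Var _ k)
        else O.Bool true)
        (if s`_i == 1 then O.Equal (GRing.Var _ i) (GRing.NatConst _ 1)
         else O.Bool true)).

Definition rel_formula s := let I := iota 0 (size s) in
  big_And I (fun i => big_And I (fun j => big_And I (fun k => rel_clause s i j k))).

Definition exists_rel_formula s :=
  foldr (fun i f => O.Exists i f) (rel_formula s) (iota 1 (size s).-1).

Definition preserves_rel s g := forall i j k,
  (i < size s)%N -> (j < size s)%N -> (k < size s)%N ->
  [/\ s`_i + s`_j = s`_k -> g`_i + g`_j = g`_k,
      s`_i * s`_j = s`_k -> g`_i * g`_j = g`_k &
      s`_i = 1 -> g`_i = 1].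

Lemma holds_big_And e l h :
  O.holds e (big_And l h) <-> (forall i, i \in l -> O.holds e (h i)).
Proof.
elim: l => [|a l IH] /=; first by split.
rewrite IH; split=> [[ha hl] i|hl]; first by rewrite inE => /orP[/eqP->|/hl].
by split=> [|i hi]; apply: hl; rewrite inE ?eqxx ?hi ?orbT.
Qed.

Lemma holds_rel_clause e s i j k : O.holds e (rel_clause s i j k) <->
  [/\ s`_i + s`_j = s`_k -> e`_i + e`_j = e`_k,
      s`_i * s`_j = s`_k -> e`_i * e`_j = e`_k &
      s`_i = 1 -> e`_i = 1].
Proof.
have holds_if (b : bool) f :
    O.holds e (if b then f else O.Bool true) <-> (b -> O.holds e f).
  by case: b; split=> //=; auto.
rewrite /rel_clause /= !holds_if /=; split=> [[h1 [h2 h3]]|[h1 h2 h3]].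
  by split=> /eqP; [apply: h1|apply: h2|move=> /h3 ->].
by split; [|split]=> /eqP; [apply: h1|apply: h2|move=> /h3 ->].
Qed.

Lemma holds_rel_formula e s : O.holds e (rel_formula s) <-> preserves_rel s e.
Proof.
rewrite /rel_formula holds_big_And; split=> h.
  move=> i j k hi hj hk; have := h i; rewrite mem_iota /= => /(_ hi) /holds_big_And.
  move=> /(_ j); rewrite mem_iota /= => /(_ hj) /holds_big_And.
  by move=> /(_ k); rewrite mem_iota /= => /(_ hk) /holds_rel_clause.
move=> i; rewrite mem_iota /= => hi; apply/holds_big_And => j.
rewrite mem_iota /= => hj; apply/holds_big_And => k; rewrite mem_iota /= => hk.
by apply/holds_rel_clause; apply: h.
Qed.

Lemma holds_foldr_Exists f a k e :
  O.holds e (foldr (fun i f => O.Exists i f) f (iota a k)) <->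
  exists g, (forall i, (i < a)%N \/ (a + k <= i)%N -> g`_i = e`_i) /\ O.holds g f.
Proof.
elim: k a e => [|k IH] a e /=.
  split=> [h|[g [hg hf]]]; first by exists e.
  by apply: O.eq_holds hf => i; apply: hg; rewrite addn0; case: (ltnP i a); [left|right].
split=> [[x /IH [g [hg hf]]]|[g [hg hf]]].
  exists g; split=> // i hi; rewrite hg ?nth_set_nth /=.
    case: eqP hi => // -> [].
      by rewrite ltnn.
    by rewrite addnS ltnNge leq_addr.
  by case: hi => [/ltnW|]; [left | rewrite addSnnS; right].
exists g`_a; apply/IH; exists g; split=> // i hi; rewrite nth_set_nth /=.
case: eqP => [->//|/eqP ne]; apply: hg; case: hi => [|h]; last by right; rewrite -addSnnS.
by rewrite ltnS leq_eqVlt (negbTE ne) /=; left.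
Qed.

Lemma holds_exists_rel_formula s x : (0 < size s)%N ->
  O.holds [:: x] (exists_rel_formula s) <-> exists g, g`_0 = x /\ preserves_rel s g.
Proof.
move=> s0; rewrite /exists_rel_formula holds_foldr_Exists.
split=> [[g [hg hf]]|[g [hg hf]]].
  by exists g; split; [apply: hg; left|apply/holds_rel_formula].
exists (mkseq (nth 0 g) (size s)); split.
  move=> [|i] [] //=; first by rewrite nth_mkseq.
  rewrite nth_nil add1n prednK // => hi; rewrite nth_default //.
  by rewrite size_mkseq.
apply/holds_rel_formula => i j k hi hj hk; rewrite !nth_mkseq //; exact: hf.
Qed.

Lemma rformula_exists_rel_formula s : O.rformula (exists_rel_formula s).
Proof.
have rformula_big_And l h : (forall i, O.rformula (h i)) -> O.rformula (big_And l h).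
  by move=> hh; elim: l => //= a l ->; rewrite hh.
have : O.rformula (rel_formula s).
  rewrite /rel_formula; do 3 apply: (rformula_big_And) => ?; rewrite /rel_clause /=.
  by do 3 case: ifP => _ //=.
by rewrite /exists_rel_formula; elim: (iota _ _) => //= _ l ->.
Qed.

Lemma rat_form_exists_rel_formula s : rat_form (exists_rel_formula s).
Proof.
have rat_form_big_And l h : (forall i, rat_form (h i)) -> rat_form (big_And l h).
  by move=> hh; elim: l => //= a l IH; split.
have : rat_form (rel_formula s).
  rewrite /rel_formula; do 3 apply: (rat_form_big_And) => ?; rewrite /rel_clause /=.
  by do 3 case: ifP => _ //=.
by rewrite /exists_rel_formula; elim: (iota _ _) => //= _ l ->.
Qed.

Lemma respects_index (A s g : seq R) : {subset A <= s} -> preserves_rel s g ->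
  respects A (fun y => g`_(index y s)).
Proof.
move=> sAs hg; have iS a : a \in A -> (index a s < size s)%N.
  by move=> /sAs; rewrite index_mem.
have nI a : a \in A -> s`_(index a s) = a by move=> /sAs; apply: nth_index.
split.
- by move=> h1; have [_ _] := hg _ _ _ (iS _ h1) (iS _ h1) (iS _ h1); apply; rewrite nI.
- move=> a b ha hb hab; have [+ _ _] := hg _ _ _ (iS _ ha) (iS _ hb) (iS _ hab).
  by move=> h; symmetry; apply: h; rewrite !nI.
- move=> a b ha hb hab; have [_ + _] := hg _ _ _ (iS _ ha) (iS _ hb) (iS _ hab).
  by move=> h; symmetry; apply: h; rewrite !nI.
Qed.

End RelationFormula.

Lemma in_tilde_algebraic (R : rcfType) (r : R) :
  in_tilde r -> algebraicOver (@ratr R) r.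
Proof.
case=> A [rA fixA]; apply: contrapT => r_transc.
have hr : O.holds [:: r] (exists_rel_formula (r :: A)).
  by apply/holds_exists_rel_formula => //; exists (r :: A); split=> // i j k _ _ _.
have [x xr /holds_exists_rel_formula [//|g [g0 hg]]] := rat_formula_not_isolated
  r_transc (rformula_exists_rel_formula _) (rat_form_exists_rel_formula _) hr.
have sAs : {subset A <= r :: A} by move=> a aA; rewrite inE aA orbT.
have := fixA _ (respects_index sAs hg); rewrite /= eqxx g0 => xr'.
by rewrite xr' eqxx in xr.
Qed.

Section RespectsField.
Variable K : fieldType.
Implicit Types (A : seq K) (f : K -> K).

Lemma respects0 A f : respects A f -> 0 \in A -> f 0 = 0.
Proof.
case=> _ fD _ A0; have := fD 0 0 A0 A0; rewrite addr0 => /(_ A0) E.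
by apply: (addrI (f 0)); rewrite addr0 -E.
Qed.

Lemma respectsN A f a : respects A f -> 0 \in A -> a \in A -> - a \in A ->
  f (- a) = - f a.
Proof.
move=> hf A0 aA NaA; have [_ fD _] := hf.
have := fD _ _ NaA aA; rewrite addNr => /(_ A0); rewrite (respects0 hf A0) => E.
by apply: (addIr (f a)); rewrite -E addNr.
Qed.

Lemma respects_nat A f M : respects A f -> (forall i, (i <= M)%N -> i%:R \in A) ->
  (0 < M)%N -> forall i, (i <= M)%N -> f i%:R = i%:R.
Proof.
move=> hf natA M0; have [f1 fD _] := hf.
have {}f1 : f 1 = 1 by apply: f1; have := natA 1%N M0.
elim=> [|i IH] hi; first by apply: (respects0 hf); apply: (natA 0%N).
rewrite -addn1 natrD fD ?IH ?f1 ?(ltnW hi) ?natA ?(ltnW hi) //.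
by rewrite -natrD addn1; apply: natA.
Qed.

Definition int_range (M : nat) : seq K :=
  [seq (i%:R : K) | i <- iota 0 M.+1] ++ [seq - (i%:R : K) | i <- iota 0 M.+1].

Lemma respects_int A f M : respects A f -> {subset int_range M <= A} -> (0 < M)%N ->
  forall z : int, (absz z <= M)%N -> z%:~R \in A /\ f z%:~R = z%:~R.
Proof.
move=> hf sA M0.
have natA i : (i <= M)%N -> i%:R \in A.
  move=> hi; apply/sA; rewrite mem_cat; apply/orP; left.
  by apply/mapP; exists i; rewrite ?mem_iota.
have NnatA i : (i <= M)%N -> - i%:R \in A.
  move=> hi; apply/sA; rewrite mem_cat; apply/orP; right.
  by apply/mapP; exists i; rewrite ?mem_iota.
have fn := respects_nat hf natA M0.
case=> n /= hn; first by rewrite -pmulrn; split; [apply: natA|apply: fn].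
rewrite NegzE mulrNz -pmulrn; split; first exact: NnatA.
by rewrite (respectsN hf) ?fn //; [apply: (natA 0%N)|apply: natA|apply: NnatA].
Qed.

(* All intermediate values of Horner's scheme, so that [f] commutes with it. *)
Fixpoint horner_set (cs : seq K) (x : K) : seq K :=
  match cs with
  | [::] => [:: 0]
  | c :: s => [:: horner_rec (c :: s) x; horner_rec s x * x; c] ++ horner_set s x
  end.

Lemma mem_horner_set cs x : horner_rec cs x \in horner_set cs x.
Proof. by case: cs => [|c s] /=; rewrite mem_head. Qed.

Lemma respects_horner_rec A f cs x : respects A f -> {subset horner_set cs x <= A} ->
  x \in A -> (forall c, c \in cs -> f c = c) -> f (horner_rec cs x) = horner_rec cs (f x).
Proof.
move=> hf; have [_ fD fM] := hf.
elim: cs => [|c s IH] /= hA xA fc.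
  by apply: (respects0 hf); apply: hA; rewrite mem_head.
have hA' : {subset horner_set s x <= A}.
  by move=> y hy; apply: hA; rewrite !inE hy !orbT.
have sA : horner_rec s x \in A by apply/hA'/mem_horner_set.
have mA : horner_rec s x * x \in A by apply: hA; rewrite !inE eqxx orbT.
have cA : c \in A by apply: hA; rewrite !inE eqxx !orbT.
have tA : horner_rec s x * x + c \in A by apply: hA; rewrite !inE eqxx.
rewrite fD // fM // IH // => [|y hy]; first by rewrite (fc c (mem_head _ _)).
by apply: fc; rewrite inE hy orbT.
Qed.

End RespectsField.

(* [numq c] and [denq c] are reached from [1] by additions, and [c * denq c = numq c]. *)
Definition rat_set (K : numFieldType) (c : rat) : seq K :=
  ratr c :: int_range K (maxn (absz (numq c)) (absz (denq c))).+1.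

Lemma respects_rat (K : numFieldType) (A : seq K) f (c : rat) :
  respects A f -> {subset rat_set K c <= A} -> f (ratr c) = ratr c.
Proof.
move=> hf sA; have [_ _ fM] := hf.
have iA : {subset int_range K (maxn (absz (numq c)) (absz (denq c))).+1 <= A}.
  by move=> x hx; apply: sA; rewrite inE hx orbT.
have cA : ratr c \in A by apply/sA/mem_head.
have [nA fn] := respects_int hf iA (ltn0Sn _) (leqW (leq_maxl _ _)).
have [dA fd] := respects_int hf iA (ltn0Sn _) (leqW (leq_maxr _ _)).
have dn0 : (denq c)%:~R != 0 :> K by rewrite intr_eq0 denq_neq0.
have E : ratr c * (denq c)%:~R = (numq c)%:~R :> K by rewrite /ratr divfK.
have := fM _ _ cA dA; rewrite E => /(_ nA); rewrite fn fd => E2.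
by apply: (mulIf dn0); rewrite -E2 E.
Qed.

(* [a <= x] is expressed by the relation [x = a + u * u], with [u = sqrt (x - a)]. *)
Definition le_witness (K : rcfType) (a x : K) : seq K :=
  [:: a; x; Num.sqrt (x - a); Num.sqrt (x - a) * Num.sqrt (x - a)].

Lemma respects_le (K : rcfType) (A : seq K) f a x : respects A f -> a <= x ->
  {subset le_witness a x <= A} -> f a <= f x.
Proof.
case=> _ fD fM le_ax sA; set u := Num.sqrt (x - a).
have [aA xA uA uuA] : [/\ a \in A, x \in A, u \in A & u * u \in A].
  by split; apply: sA; rewrite !inE eqxx ?orbT.
have E : a + u * u = x by rewrite -expr2 sqr_sqrtr ?subr_ge0 // addrC subrK.
have := fD _ _ aA uuA; rewrite E => /(_ xA) ->.
by rewrite fM // lerDl -expr2 sqr_ge0.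
Qed.

Lemma isolate_root (R : realType) (P : {poly R}) (r : R) : P != 0 ->
  exists a b : rat, [/\ ratr a < r, r < ratr b &
    forall y, ratr a <= y -> y <= ratr b -> root P y -> y = r].
Proof.
move=> P0.
pose d := foldr (fun s acc => Num.min acc (if s == r then 1 else `|s - r|)) 1 (rootsR P).
have d0 : 0 < d.
  rewrite /d; elim: (rootsR P) => [|s l IH] //=; rewrite lt_min IH /=.
  by case: eqP => // /eqP; rewrite -subr_eq0 -normr_gt0.
have dle y : y \in rootsR P -> y != r -> d <= `|y - r|.
  rewrite /d; elim: (rootsR P) => [|s l IH] //= hy yr; rewrite ge_min.
  move: hy; rewrite inE => /orP[/eqP ys|hl].
    by rewrite -ys (negbTE yr) lexx orbT.
  by rewrite (IH hl yr).
have [a] : exists a : rat, ratr a \in `]r - d, r[ by apply: rat_in_itvoo; lra.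
have [b] : exists b : rat, ratr b \in `]r, r + d[ by apply: rat_in_itvoo; lra.
rewrite !in_itv /= => /andP[rb bd] /andP[ad ar].
exists a, b; split => // y ay yb ry; apply/eqP/negP => /negP yr.
have hy : y \in rootsR P.
  by have := roots_on_rootsR P0 y; rewrite ry in_itv /= => <-.
have := dle y hy yr; rewrite real_leNgt ?real_normK ?num_real ?gtr0_real //.
by rewrite ltr_norml; apply/negP/negPn/andP; split; lra.
Qed.

Lemma algebraic_in_tilde (R : realType) (r : R) :
  algebraicOver (@ratr R) r -> in_tilde r.
Proof.
case=> p p0 pr; set P := map_poly (@ratr R) p; set cs := map (@ratr R) p.
have P0 : P != 0 by rewrite map_poly_eq0.
have [a [b [ar rb iso]]] := isolate_root r P0.
pose A := r :: flatten [seq rat_set R c | c <- [:: a, b & p]] ++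
  horner_set cs r ++ le_witness (ratr a) r ++ le_witness r (ratr b).
exists A; split=> [|f hf]; first exact: mem_head.
have fixQ c : c \in [:: a, b & p] -> f (ratr c) = ratr c.
  move=> cC; apply: (respects_rat hf) => x hx; rewrite inE mem_cat.
  by apply/orP; right; apply/orP; left; apply/flatten_mapP; exists c.
have horner_A : {subset horner_set cs r <= A}.
  by move=> x hx; rewrite inE !mem_cat hx !orbT.
have froot : root P (f r).
  have cs_r : horner_rec cs r = 0.
    by move: pr; rewrite /root /P map_polyE horner_Poly => /eqP.
  rewrite /root /P map_polyE horner_Poly -(respects_horner_rec hf horner_A) ?mem_head //.
    by rewrite cs_r (respects0 hf) // -cs_r horner_A ?mem_horner_set.
  by move=> _ /mapP [c cp ->]; apply: fixQ; rewrite !inE cp !orbT.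
apply: iso => //.
  rewrite -fixQ ?mem_head //; apply: (respects_le hf (ltW ar)) => x hx.
  by rewrite inE !mem_cat hx !orbT.
rewrite -[ratr b]fixQ ?inE ?eqxx ?orbT //; apply: (respects_le hf (ltW rb)) => x hx.
by rewrite inE !mem_cat hx !orbT.
Qed.

Theorem theorem6 (R : realType) (r : R) :
  in_tilde r <-> algebraicOver (@ratr R) r.
Proof. by split; [apply: in_tilde_algebraic | apply: algebraic_in_tilde]. Qed.
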